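(* Let $(X_i)_{i\in\mathbb N}$ be a countable family of independent $\{0,1\}$-valued random variables and let $X=\sum_i X_i$ with $\mathbb E(X)<\infty$. Then for all integers $k\ge 2$, $$\mathbb E(X^k)\le \mathbb E(X^{k-1})\cdot\big(k-1+\mathbb E(X)\big).$$ *)

From HB Require Import structures.
From mathcomp Require Import all_boot all_order all_algebra.
From mathcomp Require Import all_classical all_reals all_analysis.
Set Implicit Arguments. Unset Strict Implicit. Unset Printing Implicit Defensive.
Import Order.TTheory GRing.Theory Num.Theory.
Local Open Scope classical_set_scope.
Local Open Scope ring_scope.
Local Open Scope ereal_scope.

Definition mutually_independent d (T : measurableType d) (R : realType)
  (P : probability T R) (X : nat -> {RV P >-> R}) : Prop :=
  forall (s : seq nat) (B : nat -> set R),
    uniq s -> (forall i, i \in s -> measurable (B i)) ->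
    P (\bigcap_(i in [set` s]) (X i @^-1` B i)) =
    \prod_(i <- s) P (X i @^-1` B i).

Definition sum_rv d (T : measurableType d) (R : realType)
  (P : probability T R) (X : nat -> {RV P >-> R}) : T -> \bar R :=
  fun x => \sum_(0 <= i <oo) (X i x)%:E.

(* For finitely many indicators with sum S, expand S^m as a sum over the maps
   g : {1..m} -> {1..n}; since X_i^2 = X_i, the term of g is the indicator of
   "X_i = 1 for all i in the image A_g", of probability
   p(A_g) = prod_(i in A_g) P(X_i = 1) by independence.  Then
   E[S^(m+1)] = sum_g sum_j p(A_g + j), where p(A_g + j) is p(A_g) for the at
   most m indices j in A_g and P(X_j = 1) p(A_g) for the others, so
   E[S^(m+1)] <= (m + E S) E[S^m].  Monotone convergence carries this over to
   the countable sum. *)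
From HB Require Import structures.
From mathcomp Require Import all_boot all_order all_algebra.
From mathcomp Require Import all_classical all_reals all_analysis.
From mathcomp Require Import measurable_realfun.
Import Order.TTheory GRing.Theory Num.Theory.
Local Open Scope classical_set_scope.
Local Open Scope ring_scope.

Lemma sum_prod_setU1_le {R : numDomainType} {I : finType} {q : I -> R}
    (A : {set I}) : (forall i, 0 <= q i) ->
  \sum_j \prod_(i in j |: A) q i <= (#|A|%:R + \sum_j q j) * \prod_(i in A) q i.
Proof.
move=> q_ge0; have pA_ge0 : 0 <= \prod_(i in A) q i by exact: prodr_ge0.
rewrite (bigID (mem A)) /= mulrDl; apply: lerD.
  rewrite (eq_bigr (fun=> \prod_(i in A) q i)); last first.
    by move=> j jA; rewrite (finset.setUidPr _) // finset.sub1set.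
  by rewrite sumr_const mulr_natl.
rewrite (eq_bigr (fun j => q j * \prod_(i in A) q i)); last first.
  by move=> j jA; rewrite finset.big_setU1.
rewrite -mulr_suml; apply: ler_wpM2r => //.
by rewrite [leRHS](bigID (mem A)) /= lerDr sumr_ge0.
Qed.

Local Open Scope ereal_scope.

Lemma cvge_expe (R : realType) (U : Type) (F : set_system U) {FF : ProperFilter F}
    (f : U -> \bar R) (l : \bar R) (n : nat) :
  0 <= l -> f @ F --> l -> (fun x => f x ^+ n) @ F --> l ^+ n.
Proof.
move=> l_ge0 fl; elim: n => [|n IHn].
  by under eq_fun do rewrite expe0; exact: cvg_cst.
under eq_fun do rewrite expeS; rewrite expeS; apply: cvgeM => //.
case: l l_ge0 {fl IHn} => [r| |] // _.
  by apply: mule_def_fin => //; exact: fin_numX.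
by apply: mule_def_infty_neq0 => //; rewrite expe_eq0 andbF.
Qed.

Section finite_family.
Context {d : measure_display} {T : measurableType d} {R : realType}
  {P : probability T R} {I : finType} (X : I -> {RV P >-> R}).
Hypothesis X01 : forall i x, X i x = 0%R \/ X i x = 1%R.

Definition all_one (A : {set I}) : set T :=
  [set x | forall i, i \in A -> X i x = 1%R].

Hypothesis all_one_indep : forall A : {set I},
  P (all_one A) = \prod_(i in A) P (X i @^-1` [set 1%R]).

Let S x := (\sum_i X i x)%R.

Lemma prod_indic_all_one (J : finType) (h : J -> I) x :
  (\prod_(t : J) X (h t) x)%R = \1_(all_one [set h t | t : J]) x.
Proof.
rewrite indicE; have [Ax|nAx] := pselect (all_one [set h t | t : J] x).
  by rewrite mem_set // big1 // => t _; apply/Ax/imset_f.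
rewrite memNset //; have [t Xht] : exists t, X (h t) x <> 1%R.
  apply: contrapT => all1; apply: nAx => _ /imsetP[t _ ->].
  by apply: contrapT => Xht; apply: all1; exists t.
by rewrite (bigD1 t) //=; case: (X01 (h t) x) Xht => -> //; rewrite mul0r.
Qed.

Lemma indic_all_one_mul A j x :
  (\1_(all_one A) x * X j x)%R = \1_(all_one (j |: A)) x.
Proof.
rewrite !indicE; case: (X01 j x) => Xj; rewrite Xj ?mulr1 ?mulr0.
  rewrite memNset // => /(_ j (setU11 _ _)); rewrite Xj => /eqP.
  by rewrite eq_sym oner_eq0.
have [Ax|nAx] := pselect (all_one A x).
  by rewrite !mem_set // => i /setU1P[->|/Ax].
by rewrite !memNset // => Ajx; apply: nAx => i iA; apply: Ajx; rewrite setU1r.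
Qed.

Lemma indic_all_one1 j x : \1_(all_one [set j]) x = X j x.
Proof.
rewrite -[X j x]mul1r -[[set j]%SET]finset.setU0 -indic_all_one_mul indicE mem_set //.
by move=> i; rewrite finset.in_set0.
Qed.

Lemma measurable_all_one A : measurable (all_one A).
Proof.
rewrite (_ : all_one A = \bigcap_(i in [set i | i \in A]) X i @^-1` [set 1%R]).
  apply: fin_bigcap_measurable => [|i _]; first exact: finite_finset.
  exact: measurable_funPTI.
by apply/seteqP; split=> x Ax i iA; exact: Ax.
Qed.

Definition success_prob i : R := fine (P (X i @^-1` [set 1%R])).

Lemma success_probE i : P (X i @^-1` [set 1%R]) = (success_prob i)%:E.
Proof. by rewrite fineK // fin_num_measure // measurable_funPTI. Qed.

Lemma success_prob_ge0 i : (0 <= success_prob i)%R.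
Proof. by rewrite fine_ge0 // measure_ge0. Qed.

Lemma expectation_sum_indic_all_one (J : finType) (A : J -> {set I}) :
  \int[P]_x (\sum_t \1_(all_one (A t)) x)%:E =
  (\sum_t \prod_(i in A t) success_prob i)%:E.
Proof.
under eq_integral do rewrite -sumEFin.
rewrite ge0_integral_sum // => [|t]; last first.
  by apply/measurable_EFinP/measurable_indic/measurable_all_one.
rewrite -sumEFin; apply: eq_bigr => t _.
rewrite integral_indic ?setIT //; last exact: measurable_all_one.
apply: eq_trans (all_one_indep _) _; rewrite -prodEFin.
apply: eq_bigr => i _; exact: success_probE.
Qed.

Lemma sum_exprE m x :
  (S x ^+ m = \sum_(g : {ffun 'I_m -> I}) \1_(all_one [set g t | t : 'I_m]) x)%R.
Proof.
rewrite -[m in LHS]card_ord -prodr_const /S bigA_distr_bigA.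
by apply: eq_bigr => g _; exact: prod_indic_all_one.
Qed.

Lemma sum_exprSE m x :
  (S x ^+ m.+1 = \sum_(p : {ffun 'I_m -> I} * I)
                   \1_(all_one (p.2 |: [set p.1 t | t : 'I_m])) x)%R.
Proof.
rewrite -(pair_bigA _ (fun (g : {ffun 'I_m -> I}) j =>
  \1_(all_one (j |: [set g t | t : 'I_m])) x)).
rewrite exprSr sum_exprE mulr_suml; apply: eq_bigr => g _.
by rewrite /S mulr_sumr; apply: eq_bigr => j _; exact: indic_all_one_mul.
Qed.

Lemma moment_succ_le m :
  \int[P]_x ((S x)%:E ^+ m.+1) <=
  \int[P]_x ((S x)%:E ^+ m) * (m%:R%:E + \int[P]_x (S x)%:E).
Proof.
under eq_integral do rewrite -EFin_expe sum_exprSE.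
under [X in _ <= X * _]eq_integral do rewrite -EFin_expe sum_exprE.
under [X in _ <= _ * (_ + X)]eq_integral
  do rewrite /S (eq_bigr _ (fun j _ => esym (indic_all_one1 j _))).
rewrite !expectation_sum_indic_all_one -EFinD -EFinM lee_fin.
rewrite -(pair_bigA _ (fun (g : {ffun 'I_m -> I}) j =>
  \prod_(i in j |: [set g t | t : 'I_m]) success_prob i)%R) /=.
rewrite mulr_suml; apply: ler_sum => g _.
set A := [set g t | t : 'I_m].
rewrite (le_trans (sum_prod_setU1_le A success_prob_ge0)) // mulrC.
apply: ler_wpM2l; first by apply: prodr_ge0 => i _; exact: success_prob_ge0.
apply: lerD; first by rewrite ler_nat -[leqRHS]card_ord leq_imset_card.
by under [leRHS]eq_bigr do rewrite finset.big_set1.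
Qed.

End finite_family.

Section nonnegative_series.
Context {d : measure_display} {T : measurableType d} {R : realType}
  {P : probability T R} (X : nat -> {RV P >-> R}).
Hypothesis X_ge0 : forall i x, (0 <= X i x)%R.

Let S N x := (\sum_(i < N) X i x)%R.

Lemma partial_sum_cvg x : (S N x)%:E @[N --> \oo] --> sum_rv X x.
Proof.
rewrite (_ : (fun N => (S N x)%:E) = fun N => \sum_(0 <= i < N) (X i x)%:E).
  by apply: is_cvg_nneseries => i _ _; rewrite lee_fin.
by apply/funext => N; rewrite /S sumEFin big_mkord.
Qed.

Lemma sum_rv_ge0 x : 0 <= sum_rv X x.
Proof. by apply: nneseries_ge0 => i _ _; rewrite lee_fin. Qed.

Lemma partial_sum_expe_nondecreasing x n :
  {homo (fun N => (S N x)%:E ^+ n) : N M / (N <= M)%N >-> N <= M}.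
Proof.
move=> N M NM; rewrite -!EFin_expe lee_fin lerXn2r ?nnegrE ?sumr_ge0 //.
rewrite /S -!(big_mkord xpredT (fun i => X i x)) /=.
exact: (nondecreasing_series (fun i _ _ => X_ge0 i x)).
Qed.

Lemma measurable_partial_sum_expe N n :
  measurable_fun [set: T] (fun x => (S N x)%:E ^+ n).
Proof.
under eq_fun do rewrite -EFin_expe.
apply/measurable_EFinP/measurable_funX/measurable_sum => i.
exact: measurable_funPT.
Qed.

Lemma partial_sum_moment_cvg n :
  \int[P]_x ((S N x)%:E ^+ n) @[N --> \oo] --> \int[P]_x (sum_rv X x ^+ n).
Proof.
have sum_rv_expE x : sum_rv X x ^+ n = lim ((S N x)%:E ^+ n @[N --> \oo]).
  apply/esym/(cvg_lim (@ereal_hausdorff R)).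
  by apply: cvge_expe; [exact: sum_rv_ge0|exact: partial_sum_cvg].
under [X in _ --> X]eq_integral do rewrite sum_rv_expE.
apply: cvg_monotone_convergence => //.
- by move=> N; exact: measurable_partial_sum_expe.
- by move=> N x _; rewrite expe_ge0 // lee_fin sumr_ge0.
- by move=> x _; exact: partial_sum_expe_nondecreasing.
Qed.

Lemma partial_sum_moment_le n N :
  \int[P]_x ((S N x)%:E ^+ n) <= \int[P]_x (sum_rv X x ^+ n).
Proof.
rewrite -(cvg_lim (@ereal_hausdorff R) (partial_sum_moment_cvg n)).
apply: lime_ge; first exact: cvgP (partial_sum_moment_cvg n).
exists N => // M /= NM; apply: ge0_le_integral => //.
- by move=> x _; rewrite expe_ge0 // lee_fin sumr_ge0.
- exact: measurable_partial_sum_expe.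
- exact: measurable_partial_sum_expe.
- by move=> x _; exact: partial_sum_expe_nondecreasing.
Qed.

End nonnegative_series.

Lemma mutually_independent_all_one {d : measure_display} {T : measurableType d}
    {R : realType} {P : probability T R} (X : nat -> {RV P >-> R}) :
  mutually_independent X -> forall n (A : {set 'I_n}),
  P (all_one (fun i : 'I_n => X i) A) = \prod_(i in A) P (X i @^-1` [set 1%R]).
Proof.
move=> X_indep n A.
have -> : all_one (fun i : 'I_n => X i) A =
          \bigcap_(i in [set` map val (enum A)]) X i @^-1` [set 1%R].
  apply/seteqP; split=> [x Ax _ /mapP[i iA ->]|x Ax i iA].
    by apply: Ax; rewrite -mem_enum.
  by apply: (Ax (val i)); apply/mapP; exists i; rewrite ?mem_enum.
rewrite X_indep.
- by rewrite big_map big_enum.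
- by rewrite map_inj_uniq ?enum_uniq //; exact: val_inj.
- by move=> i _; exact: measurable_set1.
Qed.

Theorem lemma3p2 (d : measure_display) (T : measurableType d) (R : realType)
  (P : probability T R) (X : nat -> {RV P >-> R})
  (Hind : mutually_independent X)
  (H01 : forall i x, X i x = 0%R \/ X i x = 1%R)
  (Hfin : \int[P]_x sum_rv X x < +oo)
  (k : nat) (hk : (2 <= k)%N) :
  \int[P]_x (sum_rv X x ^+ k) <=
  \int[P]_x (sum_rv X x ^+ k.-1) * ((k.-1)%:R%:E + \int[P]_x sum_rv X x).
Proof.
case: k hk => [|m] // _ /=.
have X_ge0 i x : (0 <= X i x)%R by case: (H01 i x) => ->.
have moment_cvg := partial_sum_moment_cvg X X_ge0 m.+1.
rewrite -(cvg_lim (@ereal_hausdorff R) moment_cvg).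
apply: lime_le; first exact: cvgP moment_cvg.
apply: nearW => N.
apply: le_trans (moment_succ_le (fun i : 'I_N => X i) _ _ m) _.
- by move=> i; exact: H01.
- exact: mutually_independent_all_one.
have partial_sum_ge0 x : (0 <= \sum_(i < N) X i x)%R by exact: sumr_ge0.
apply: lee_pmul.
- by apply: integral_ge0 => x _; rewrite expe_ge0 // lee_fin.
- by rewrite adde_ge0 // integral_ge0 // => x _; rewrite lee_fin.
- exact: partial_sum_moment_le.
- by rewrite leeD2l //; exact: (partial_sum_moment_le X X_ge0 1 N).
Qed.
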